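(* Let $n \geqslant 12$ be even and let $\lambda$ be a natural number with $2 \leqslant \lambda \leqslant \frac{n-4}{4}$. Then the partition $\left(\frac{n-2\lambda}{2},\ \lambda+2,\ 3,\ 2\times(\lambda-2),\ 1\times\frac{n-4\lambda-2}{2}\right)$ of $n$ corresponds to the eigenvalue $\lambda$.
   Context: In a partition, the notation $a\times t$ means that the part $a$ is repeated $t$ times (possibly $t=0$). An integer partition $(n_1,\dots,n_k)$ of $n$ (with $n_1\geqslant \dots\geqslant n_k\geqslant 1$, $\sum_j n_j=n$) is said to correspond to the eigenvalue $\lambda$ if $\lambda=\sum_{j=1}^k \frac{n_j(n_j-2j+1)}{2}$; this is the eigenvalue of the Transposition graph $T_n=\mathrm{Cay}(\mathrm{Sym}_n,T)$ ($T$ the set of all transpositions) associated with the irreducible character of $\mathrm{Sym}_n$ indexed by the partition. *)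

From mathcomp Require Import all_boot all_order all_algebra.
Set Implicit Arguments. Unset Strict Implicit. Unset Printing Implicit Defensive.
Import Order.TTheory GRing.Theory Num.Theory.

Definition is_partition (n : nat) (s : seq nat) : bool :=
  [&& sorted geq s, all (fun a => 0 < a)%N s & sumn s == n].

(* lambda(s) = sum_{j=1}^k n_j (n_j - 2 j + 1) / 2, computed in rat.
   Index i : 'I_(size s) corresponds to j = i + 1. *)
Definition partition_eigenvalue (s : seq nat) : rat :=
  (\sum_(i < size s)
     ((nth 0%N s i)%:R * ((nth 0%N s i)%:R - 2 * (i.+1)%:R + 1)) / 2)%R.

Definition corresponds_to (n : nat) (s : seq nat) (lam : rat) : Prop :=
  is_partition n s /\ partition_eigenvalue s = lam.

From mathcomp Require Import all_boot all_order all_algebra.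
From mathcomp Require Import ring zify.
Import GRing.Theory.

(* The eigenvalue is a sum of position-dependent terms, so it is additive over
   concatenation once each block is evaluated at the right starting position;
   a block of [k] equal parts [c] starting at position [o] contributes
   [k c (c - k - 2 o) / 2].  Summing the five blocks of the partition gives
   a polynomial identity in the two free parameters. *)

Definition eigen_term (c j : nat) : rat := (c%:R * (c%:R - 2 * j.+1%:R + 1) / 2)%R.

Fixpoint eigen_from (o : nat) (s : seq nat) : rat :=
  if s is c :: s' then (eigen_term c o + eigen_from o.+1 s')%R else 0%R.

Lemma eigen_from_sum o s :
  eigen_from o s = (\sum_(i < size s) eigen_term (nth 0 s i) (i + o))%R.
Proof.
elim: s o => [|c s IHs] o /=; first by rewrite big_ord0.
by rewrite big_ord_recl IHs; congr (_ + _)%R; apply: eq_bigr => i _; rewrite addSnnS.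
Qed.

Lemma partition_eigenvalueE s : partition_eigenvalue s = eigen_from 0 s.
Proof. by rewrite eigen_from_sum; apply: eq_bigr => i _; rewrite addn0. Qed.

Lemma eigen_from_cat o s t :
  eigen_from o (s ++ t) = (eigen_from o s + eigen_from (size s + o) t)%R.
Proof. by elim: s o => [|c s IHs] o /=; rewrite ?add0r ?add0n // IHs addrA addSnnS. Qed.

Lemma eigen_from_nseq o k c :
  eigen_from o (nseq k c) = (k%:R * c%:R * (c%:R - k%:R - 2 * o%:R) / 2)%R.
Proof.
elim: k o => [|k IHk] o /=; first by rewrite !mul0r.
by rewrite IHk /eigen_term -!natr1; field.
Qed.

Lemma path_geq_nseq_cat x c m s :
  c <= x -> path geq c s -> path geq x (nseq m c ++ s).
Proof.
have geq_trans : transitive geq by move=> y x' z /= yx zy; apply: leq_trans zy yx.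
elim: m x => [|m IHm] x /= cx cs; last by rewrite cx IHm.
exact: (path_le (leT := geq) geq_trans _ cs).
Qed.

Lemma corresponds_to_param l k :
  corresponds_to (4 * l + 12 + 2 * k)
    ([:: l + 4 + k; l + 4; 3] ++ nseq l 2 ++ nseq k.+1 1) (l + 2)%:R.
Proof.
split.
  apply/and3P; split.
  - rewrite /sorted /=; apply/and3P; split; [lia | lia |].
    by rewrite path_geq_nseq_cat //= -[nseq k 1]cats0 path_geq_nseq_cat.
  - rewrite !all_cat !all_nseq /= !orbT !andbT; lia.
  - rewrite !sumn_cat !sumn_nseq /=; lia.
rewrite partition_eigenvalueE !eigen_from_cat !eigen_from_nseq size_nseq /=.
by rewrite /eigen_term -!natr1 !natrD; field.
Qed.

Theorem lemma4 (n lam : nat) :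
  (12 <= n)%N -> ~~ odd n -> (2 <= lam)%N -> (4 * lam <= n - 4)%N ->
  corresponds_to n
    ([:: (n - 2 * lam) %/ 2; lam + 2; 3]
       ++ nseq (lam - 2) 2 ++ nseq ((n - 4 * lam - 2) %/ 2) 1)
    (lam%:R)%R.
Proof.
move=> _ n_even lam_ge2 lam_le.
have [k ->] : exists k, n = 4 * lam + 4 + 2 * k.
  exists ((n - 4 * lam - 4) %/ 2).
  have := odd_double_half n; rewrite (negbTE n_even) add0n -mul2n; lia.
have [l ->] : exists l, lam = l + 2 by exists (lam - 2); lia.
have -> : (4 * (l + 2) + 4 + 2 * k - 2 * (l + 2)) %/ 2 = l + 4 + k.
  by rewrite -(mulKn (l + 4 + k) (isT : 0 < 2)); congr divn; lia.
have -> : (4 * (l + 2) + 4 + 2 * k - 4 * (l + 2) - 2) %/ 2 = k.+1.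
  by rewrite -(mulKn k.+1 (isT : 0 < 2)); congr divn; lia.
have -> : 4 * (l + 2) + 4 + 2 * k = 4 * l + 12 + 2 * k by lia.
by rewrite addnK -[l + 2 + 2]addnA; apply: corresponds_to_param.
Qed.
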